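(* Let $\mathbb{X},\mathbb{Y}$ be finite-dimensional real Hilbert spaces, $f:\mathbb{X}\to(-\infty,\infty]$ and $g:\mathbb{Y}\to(-\infty,\infty]$ proper, convex and lower semicontinuous, $K:\mathbb{X}\to\mathbb{Y}$ linear, and $h:\mathbb{X}\to\mathbb{R}$ convex and differentiable with $\bar L$-Lipschitz gradient. Assume (A1) below holds. Let $\{(z_n,x_n,w_n,y_n,\tau_n)\}$ be generated by the P-GRPDA algorithm described in the context. Then $\{(x_n,y_n)\}$ converges to a saddle point of $\mathbb{L}(x,y):=f(x)+h(x)+\langle Kx,y\rangle-g^*(y)$, i.e., to some $(\hat x,\hat y)$ with $\mathbb{L}(\hat x,y)\le\mathbb{L}(\hat x,\hat y)\le\mathbb{L}(x,\hat y)$ for all $(x,y)\in\mathbb{X}\times\mathbb{Y}$.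
   Context: $\phi=\frac{1+\sqrt5}{2}$; $K^*$ adjoint of $K$; $g^*$ Fenchel conjugate of $g$; $\operatorname{prox}_{\lambda f}(x)=\arg\min_{u}\{f(u)+\frac{1}{2\lambda}\|u-x\|^2\}$. (A1): the saddle point problem $\min_{x}\max_{y}\mathbb{L}(x,y)$ has a nonempty solution set, and $0\in\operatorname{ri}(K(\operatorname{dom}f)-\operatorname{dom}g)$ (ri = relative interior). (The paper also assumes the proximal maps of $f,g$ are efficiently computable.) P-GRPDA: choose $x_0\in\mathbb{X}$, $y_0\in\mathbb{Y}$, set $z_0=x_0$, choose $\beta>0$, $\psi\in(1,\phi]$, $0<2\mu'<\mu<\psi/2$, $\tau_0>0$. For $n=1,2,\dots$: $z_n=\frac{\psi-1}{\psi}x_{n-1}+\frac1\psi z_{n-1}$; $x_n=\operatorname{prox}_{\tau_{n-1}f}\big(z_n-\tau_{n-1}K^*y_{n-1}-\tau_{n-1}\nabla h(x_{n-1})\big)$; $\tau_n=\min\left\{\tau_{n-1},\ \frac{\mu\|x_n-x_{n-1}\|}{\sqrt\beta\|Kx_n-Kx_{n-1}\|},\ \frac{\mu'\|x_n-x_{n-1}\|}{\|\nabla h(x_n)-\nabla h(x_{n-1})\|}\right\}$, $\sigma_n=\beta\tau_n$; $w_n=\operatorname{prox}_{\frac{1}{\sigma_n}g}\big(\frac{y_{n-1}}{\sigma_n}+Kx_n\big)$; $y_n=y_{n-1}+\sigma_n(Kx_n-w_n)$. Conventions in the $\tau_n$ update: $1/0=\infty$ (a term with zero denominator and nonzero numerator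 is ignored) and $0/0=\infty$ (so $\tau_n=\tau_{n-1}$ if $x_n=x_{n-1}$). *)

(* R : realType, X = 'rV[R]_n, Y = 'rV[R]_m with the
   Euclidean inner product. *)
From HB Require Import structures.
From mathcomp Require Import all_boot all_order all_algebra.
From mathcomp Require Import all_classical all_reals all_analysis.
Set Implicit Arguments. Unset Strict Implicit. Unset Printing Implicit Defensive.
Import Order.TTheory GRing.Theory Num.Theory.
Import numFieldNormedType.Exports.
Local Open Scope classical_set_scope.
Local Open Scope ring_scope.

Section Defs.
Variable R : realType.

Definition dotv {k : nat} (u v : 'rV[R]_k) : R := (u *m v^T) 0 0.
Definition enorm {k : nat} (u : 'rV[R]_k) : R := Num.sqrt (dotv u u).

Definition edom {k : nat} (F : 'rV[R]_k -> \bar R) : set 'rV[R]_k :=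
  [set x | (F x < +oo)%E].

Definition proper_fun {k : nat} (F : 'rV[R]_k -> \bar R) : Prop :=
  (exists x, (F x < +oo)%E) /\ (forall x, (-oo < F x)%E).

(* convexity of an extended-real valued function (proper case: no -oo) *)
Definition convex_efun {k : nat} (F : 'rV[R]_k -> \bar R) : Prop :=
  forall (x y : 'rV[R]_k) (t : R), 0 < t < 1 ->
    (F (t *: x + (1 - t) *: y)%R <= t%:E * F x + (1 - t)%:E * F y)%E.

Definition convex_rfun {k : nat} (F : 'rV[R]_k -> R) : Prop :=
  forall (x y : 'rV[R]_k) (t : R), 0 <= t <= 1 ->
    F (t *: x + (1 - t) *: y) <= t * F x + (1 - t) * F y.

Definition is_gradient {k : nat} (F : 'rV[R]_k -> R) (G : 'rV[R]_k -> 'rV[R]_k)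
  : Prop :=
  forall x eps, 0 < eps -> exists2 del, 0 < del &
    forall v, enorm v < del ->
      `|F (x + v) - F x - dotv (G x) v| <= eps * enorm v.

Definition lipschitz_with {k : nat} (L : R) (G : 'rV[R]_k -> 'rV[R]_k) : Prop :=
  forall x y, enorm (G x - G y) <= L * enorm (x - y).

Definition fconj {k : nat} (F : 'rV[R]_k -> \bar R) (y : 'rV[R]_k) : \bar R :=
  ereal_sup (range (fun w => ((dotv w y)%:E - F w)%E)).

Definition is_prox {k : nat} (lam : R) (F : 'rV[R]_k -> \bar R)
  (v p : 'rV[R]_k) : Prop :=
  forall u, (F p + ((2 * lam)^-1 * enorm (p - v) ^+ 2)%R%:E
             <= F u + ((2 * lam)^-1 * enorm (u - v) ^+ 2)%R%:E)%E.

(* the Lagrangian  L(x,y) = f x + h x + <Kx, y> - g^*(y), with K x := x *m K *)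
Definition lagr {n m : nat} (f : 'rV[R]_n -> \bar R) (h : 'rV[R]_n -> R)
  (K : 'M[R]_(n, m)) (g : 'rV[R]_m -> \bar R) (x : 'rV[R]_n) (y : 'rV[R]_m)
  : \bar R :=
  (f x + (h x + dotv (x *m K) y)%R%:E - fconj g y)%E.

Definition saddle_point {n m : nat} (f : 'rV[R]_n -> \bar R) (h : 'rV[R]_n -> R)
  (K : 'M[R]_(n, m)) (g : 'rV[R]_m -> \bar R) (xh : 'rV[R]_n) (yh : 'rV[R]_m)
  : Prop :=
  f xh \is a fin_num /\ fconj g yh \is a fin_num /\
  (forall x y, (lagr f h K g xh y <= lagr f h K g xh yh)%E /\
               (lagr f h K g xh yh <= lagr f h K g x yh)%E).

Definition affine_hull {k : nat} (C : set 'rV[R]_k) : set 'rV[R]_k :=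
  [set x | exists (p : nat) (pts : 'I_p -> 'rV[R]_k) (a : 'I_p -> R),
     (forall i, C (pts i)) /\ \sum_(i < p) a i = 1 /\
     x = \sum_(i < p) a i *: pts i].

Definition rel_interior {k : nat} (C : set 'rV[R]_k) : set 'rV[R]_k :=
  [set x | C x /\ exists2 eps, 0 < eps &
     forall z, affine_hull C z -> enorm (z - x) < eps -> C z].

Definition Kdomf_minus_domg {n m : nat} (f : 'rV[R]_n -> \bar R)
  (K : 'M[R]_(n, m)) (g : 'rV[R]_m -> \bar R) : set 'rV[R]_m :=
  [set u | exists x w, edom f x /\ edom g w /\ u = x *m K - w].

(* min(t, a/b) with the convention that the term a/b is ignored when b = 0
   (1/0 = oo and 0/0 = oo) *)
Definition min_ratio (t a b : R) : R := if b == 0 then t else Num.min t (a / b).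

End Defs.

Definition golden {R : realType} : R := (1 + Num.sqrt 5) / 2.

(* Write E(k) = psi/(psi-1)/2 |z_(k+2) - xh|^2 + |y_k - yh|^2/(2 beta)
   + mu'/2 |x_(k+1) - x_k|^2 for a saddle point (xh, yh).  Adding the optimality
   conditions of two consecutive prox steps, the saddle inequalities and the
   gradient inequality for h, and using the step-size rule to absorb the coupling
   terms in K and grad h, gives
     E(k+1) + c (|x_(k+1) - z_(k+2)|^2 + |x_(k+2) - x_(k+1)|^2 + |y_(k+1) - y_k|^2)
       <= E(k)
   for large k; psi <= golden ratio enters as psi^2 <= psi + 1, and the step sizes,
   being nonincreasing and bounded below, eventually satisfy
   tau_k <= (1 + del) tau_(k+1) for any del > 0.  Hence the iterates are bounded
   and their successive differences vanish; a cluster point then satisfies the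
   limiting optimality conditions (lower semicontinuity of f and of g^* ), so it
   is a saddle point.  Using it as (xh, yh), E is eventually nonincreasing and
   small along the cluster subsequence, so it tends to 0, which gives
   convergence of the whole sequence. *)

From HB Require Import structures.
From mathcomp Require Import all_boot all_order all_algebra.
From mathcomp Require Import all_classical all_reals all_analysis.
From mathcomp Require Import ring lra.
Set Implicit Arguments. Unset Strict Implicit. Unset Printing Implicit Defensive.
Import Order.TTheory GRing.Theory Num.Theory.
Import numFieldNormedType.Exports.
Local Open Scope classical_set_scope.
Local Open Scope ring_scope.

Section Euclidean.
Variables (R : realType) (k : nat).
Implicit Types (u v a b c p : 'rV[R]_k) (t e : R).

Lemma dotvE u v : dotv u v = \sum_j u 0 j * v 0 j.
Proof. by rewrite /dotv !mxE; apply: eq_bigr => j _; rewrite mxE. Qed.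

Lemma dotvC u v : dotv u v = dotv v u.
Proof. by rewrite !dotvE; apply: eq_bigr => j _; rewrite mulrC. Qed.

Lemma dotvDl a b c : dotv (a + b) c = dotv a c + dotv b c.
Proof. by rewrite !dotvE -big_split; apply: eq_bigr => j _; rewrite !mxE mulrDl. Qed.

Lemma dotvDr a b c : dotv c (a + b) = dotv c a + dotv c b.
Proof. by rewrite dotvC dotvDl !(dotvC c). Qed.

Lemma dotvZl t a c : dotv (t *: a) c = t * dotv a c.
Proof. by rewrite !dotvE mulr_sumr; apply: eq_bigr => j _; rewrite !mxE mulrA. Qed.

Lemma dotvZr t a c : dotv c (t *: a) = t * dotv c a.
Proof. by rewrite dotvC dotvZl dotvC. Qed.

Lemma dotvNl a c : dotv (- a) c = - dotv a c.
Proof. by rewrite -scaleN1r dotvZl mulN1r. Qed.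

Lemma dotvNr a c : dotv c (- a) = - dotv c a.
Proof. by rewrite dotvC dotvNl dotvC. Qed.

Lemma dotvBl a b c : dotv (a - b) c = dotv a c - dotv b c.
Proof. by rewrite dotvDl dotvNl. Qed.

Lemma dotvBr a b c : dotv c (a - b) = dotv c a - dotv c b.
Proof. by rewrite dotvDr dotvNr. Qed.

Lemma dotvv_ge0 u : 0 <= dotv u u.
Proof. by rewrite dotvE; apply: sumr_ge0 => j _; rewrite -expr2 sqr_ge0. Qed.

Lemma enorm_ge0 u : 0 <= enorm u.
Proof. exact: sqrtr_ge0. Qed.

Lemma enorm_sqr u : enorm u ^+ 2 = dotv u u.
Proof. by rewrite /enorm sqr_sqrtr // dotvv_ge0. Qed.

Lemma enormZ t u : enorm (t *: u) = `|t| * enorm u.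
Proof.
by rewrite /enorm dotvZl dotvZr mulrA -expr2 sqrtrM ?sqr_ge0 // sqrtr_sqr.
Qed.

Lemma enormN u : enorm (- u) = enorm u.
Proof. by rewrite -scaleN1r enormZ normrN normr1 mul1r. Qed.

Lemma enorm_distC u v : enorm (u - v) = enorm (v - u).
Proof. by rewrite -enormN opprB. Qed.

Lemma dotv_sqr_le a b : dotv a b ^+ 2 <= dotv a a * dotv b b.
Proof.
have quad t : 0 <= dotv a a - 2 * t * dotv a b + t ^+ 2 * dotv b b.
  have := dotvv_ge0 (a - t *: b).
  by rewrite !dotvBl !dotvBr !dotvZl !dotvZr (dotvC b a); nra.
have [bb0|bbn0] := eqVneq (dotv b b) 0.
  have [->|abn0] := eqVneq (dotv a b) 0; first by rewrite bb0; nra.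
  have := quad ((dotv a a + 1) / (2 * dotv a b)); rewrite bb0 mulr0 addr0.
  have -> : 2 * ((dotv a a + 1) / (2 * dotv a b)) * dotv a b = dotv a a + 1.
    by field; rewrite abn0.
  lra.
(* the quadratic in [t] is minimal at [t = <a,b> / <b,b>] *)
have bb0 : 0 < dotv b b by rewrite lt_def bbn0 dotvv_ge0.
set t := dotv a b / dotv b b.
have e : (dotv a a - 2 * t * dotv a b + t ^+ 2 * dotv b b) * dotv b b
         = dotv a a * dotv b b - dotv a b ^+ 2 by rewrite /t; field.
by have := mulr_ge0 (quad t) (ltW bb0); rewrite e subr_ge0.
Qed.

Lemma normr_dotv_le a b : `|dotv a b| <= enorm a * enorm b.
Proof.
rewrite -ler_sqr ?nnegrE ?mulr_ge0 ?enorm_ge0 //.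
by rewrite real_normK ?num_real // exprMn !enorm_sqr dotv_sqr_le.
Qed.

Lemma dotv_le_enorm a b : dotv a b <= enorm a * enorm b.
Proof. exact: le_trans (ler_norm _) (normr_dotv_le a b). Qed.

Lemma ler_enormD u v : enorm (u + v) <= enorm u + enorm v.
Proof.
rewrite -ler_sqr ?nnegrE ?addr_ge0 ?enorm_ge0 //.
rewrite enorm_sqr dotvDl !dotvDr (dotvC v u) sqrrD !enorm_sqr.
have := dotv_le_enorm u v; lra.
Qed.

Lemma dotvB_le a a' b b' :
  dotv a' b' - dotv a b <= enorm (a' - a) * enorm b' + enorm a * enorm (b' - b).
Proof.
have -> : dotv a' b' - dotv a b = dotv (a' - a) b' + dotv a (b' - b).
  by rewrite dotvBl dotvBr; ring.
exact: lerD (dotv_le_enorm _ _) (dotv_le_enorm _ _).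
Qed.

Lemma inv_scaled_dotv_le t tmin e r a b : 0 < tmin -> tmin <= t ->
  enorm a <= e -> enorm b <= r -> - (t^-1 * dotv a b) <= e * (tmin^-1 * r).
Proof.
move=> tmin0 tmin_t ae br; have t0 := lt_le_trans tmin0 tmin_t.
have ab : - dotv a b <= e * r.
  apply: le_trans (ler_norm _) _; rewrite normrN.
  exact: le_trans (normr_dotv_le _ _) (ler_pM (enorm_ge0 _) (enorm_ge0 _) ae br).
rewrite mulrCA -mulrN; apply: le_trans (ler_wpM2l _ ab) _; first by rewrite invr_ge0 ltW.
rewrite ler_wpM2r ?lef_pV2 //.
exact: mulr_ge0 (le_trans (enorm_ge0 a) ae) (le_trans (enorm_ge0 b) br).
Qed.

Lemma enorm_le_addr1 a b e : enorm (a - b) <= e -> e <= 1 -> enorm a <= enorm b + 1.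
Proof.
move=> abe e1; rewrite -[a](subrK b) addrC.
by apply: le_trans (ler_enormD _ _) _; rewrite lerD2l (le_trans abe).
Qed.

Lemma normr_entry_le_enorm u j : `|u 0 j| <= enorm u.
Proof.
rewrite -ler_sqr ?nnegrE ?enorm_ge0 // real_normK ?num_real //.
rewrite enorm_sqr dotvE (bigD1 j) //= -expr2 lerDl.
by apply: sumr_ge0 => i _; rewrite -expr2 sqr_ge0.
Qed.

Lemma mxnorm_le_enorm u : `|u| <= enorm u.
Proof.
rewrite [leLHS]/Num.norm /= mx_normrE; apply/bigmax_leP; split; first exact: enorm_ge0.
by move=> [i j] _ /=; rewrite (ord1 i); apply: normr_entry_le_enorm.
Qed.

Lemma enorm_le_mxnorm u : enorm u <= (k%:R + 1) * `|u|.
Proof.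
have k0 : (0 : R) <= k%:R by [].
rewrite -ler_sqr ?nnegrE ?enorm_ge0 ?mulr_ge0 ?addr_ge0 //.
apply: le_trans (_ : k%:R * `|u| ^+ 2 <= _); last by have := sqr_ge0 `|u|; nra.
rewrite enorm_sqr dotvE mulr_natl -[X in _ *+ X]card_ord -sumr_const.
apply: ler_sum => j _; rewrite -expr2 -real_normK ?num_real //.
rewrite ler_sqr ?nnegrE ?normr_ge0 // [leRHS]/Num.norm /= mx_normrE.
exact: (@le_bigmax _ _ _ 0 (fun ij : 'I_1 * 'I_k => `|u ij.1 ij.2|) (0, j)).
Qed.

Lemma nbhs_enorm_lt p e : 0 < e -> nbhs p [set v | enorm (v - p) < e].
Proof.
move=> e0; have k1 : 0 < k%:R + 1 :> R by rewrite ltr_wpDl.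
apply: filterS (nbhsx_ballx p _ (divr_gt0 e0 k1)) => v.
rewrite -ball_normE /ball_ /= distrC ltr_pdivlMr // mulrC => pv.
exact: le_lt_trans (enorm_le_mxnorm _) pv.
Qed.

Lemma nbhs_enormP p (V : set 'rV[R]_k) : nbhs p V ->
  exists2 d, 0 < d & forall v, enorm (v - p) < d -> V v.
Proof.
move=> /nbhs_ballP [d d0 Hd]; exists d => // v pv; apply: Hd.
rewrite -ball_normE /ball_ /= distrC.
exact: le_lt_trans (mxnorm_le_enorm _) pv.
Qed.

End Euclidean.

Section Matrices.
Variables (R : realType) (n m : nat).

Lemma dotv_mulmx_tr (K : 'M[R]_(n, m)) a b : dotv (a *m K) b = dotv a (b *m K^T).
Proof. by rewrite /dotv trmx_mul trmxK mulmxA. Qed.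

Lemma enorm_mulmx_bounded (K : 'M[R]_(n, m)) :
  exists2 c, 0 < c & forall v, enorm (v *m K) <= c * enorm v.
Proof.
pose S := \sum_j dotv (col j K)^T (col j K)^T.
have S0 : 0 <= S by apply: sumr_ge0 => j _; apply: dotvv_ge0.
exists (Num.sqrt S + 1); first by rewrite ltr_wpDl ?sqrtr_ge0.
move=> v; apply: le_trans (_ : Num.sqrt S * enorm v <= _); last first.
  by rewrite ler_wpM2r ?enorm_ge0 // lerDl.
rewrite -ler_sqr ?nnegrE ?mulr_ge0 ?enorm_ge0 ?sqrtr_ge0 //.
rewrite exprMn !enorm_sqr sqr_sqrtr // dotvE /S mulr_suml.
apply: ler_sum => j _.
have -> : (v *m K) 0 j = dotv v (col j K)^T.
  by rewrite dotvE mxE; apply: eq_bigr => i _; rewrite !mxE.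
by rewrite -expr2 mulrC dotv_sqr_le.
Qed.

Lemma dotv_row_mx (a : 'rV[R]_n) (b : 'rV[R]_m) :
  dotv (row_mx a b) (row_mx a b) = dotv a a + dotv b b.
Proof. by rewrite /dotv tr_row_mx mul_row_col mxE. Qed.

Lemma enorm_row_mx_bounds (a : 'rV[R]_n) (b : 'rV[R]_m) :
  [/\ enorm a <= enorm (row_mx a b), enorm b <= enorm (row_mx a b)
    & enorm (row_mx a b) <= enorm a + enorm b].
Proof.
have ea := enorm_ge0 a; have eb := enorm_ge0 b.
have eab := enorm_ge0 (row_mx a b).
have sq : enorm (row_mx a b) ^+ 2 = enorm a ^+ 2 + enorm b ^+ 2.
  by rewrite !enorm_sqr dotv_row_mx.
split; rewrite -ler_sqr ?nnegrE ?addr_ge0 // sq; nra.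
Qed.

Definition joint_cluster (X : nat -> 'rV[R]_n) (Y : nat -> 'rV[R]_m) xs ys :=
  forall e, 0 < e -> forall M, exists k,
    [/\ (M <= k)%N, enorm (X k - xs) < e & enorm (Y k - ys) < e].

Lemma bounded_joint_cluster (X : nat -> 'rV[R]_n) (Y : nat -> 'rV[R]_m) B N :
  (forall k, (N <= k)%N -> enorm (X k) <= B /\ enorm (Y k) <= B) ->
  exists xs ys, joint_cluster X Y xs ys.
Proof.
move=> XYB; pose U j := row_mx (X (j + N)%N) (Y (j + N)%N).
pose box := [set v : 'rV[R]_(n + m) | forall i, `[- (2 * B), 2 * B]%classic (v 0 i)].
have box_compact : compact box.
  by apply: (@rV_compact _ _ (fun=> `[- (2 * B), 2 * B]%classic)) => _;
    apply: segment_compact.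
have U_box : (U @ \oo) box.
  exists 0%N => // j _ i /=; rewrite in_itv /= -ler_norml.
  have [XB YB] := XYB (j + N)%N (leq_addl _ _).
  have [_ _ UXY] := enorm_row_mx_bounds (X (j + N)%N) (Y (j + N)%N).
  have := normr_entry_le_enorm (U j) i; lra.
have [p [_ p_cluster]] := box_compact _ _ U_box.
exists (lsubmx p), (rsubmx p) => e e0 M.
have U_tail : (U @ \oo) [set v | exists2 j, (M <= j)%N & v = U j].
  by exists M => // j Mj; exists j.
have [_ [[j Mj ->] Up]] := p_cluster _ _ U_tail (nbhs_enorm_lt p e0).
have [UX UY _] := enorm_row_mx_bounds (X (j + N)%N - lsubmx p) (Y (j + N)%N - rsubmx p).
rewrite -add_row_mx -opp_row_mx hsubmxK in UX UY.
exists (j + N)%N; split; first exact: leq_trans Mj (leq_addr _ _).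
- exact: le_lt_trans UX Up.
- exact: le_lt_trans UY Up.
Qed.

End Matrices.

Section ConvexAnalysis.
Variables (R : realType) (k : nat).
Implicit Types (u v p : 'rV[R]_k) (F g : 'rV[R]_k -> \bar R).

Lemma EFin_of_finite (x : \bar R) : (-oo < x)%E -> (x < +oo)%E -> exists r, x = r%:E.
Proof. by case: x => // r _ _; exists r. Qed.

Lemma le0_of_le_small_multiples (Q M : R) :
  0 <= M -> (forall t, 0 < t < 1 -> Q <= t * M) -> Q <= 0.
Proof.
move=> M0 QM; apply/ler_addgt0Pr => e e0; rewrite add0r.
pose t := Num.min 2^-1 (e / (M + 1)).
have t0 : 0 < t by rewrite lt_min invr_gt0 ltr0n divr_gt0 // ltr_wpDl.
have t1 : t < 1 by rewrite gt_min invf_lt1 ?ltr1n.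
apply: le_trans (QM t _) _; first by rewrite t0 t1.
apply: le_trans (_ : e / (M + 1) * M <= _).
  by rewrite ler_wpM2r // ge_min lexx orbT.
rewrite mulrAC ler_pdivrMr ?ltr_wpDl //; nra.
Qed.

Lemma prox_variational_ineq (lam : R) F v p :
  0 < lam -> proper_fun F -> convex_efun F -> is_prox lam F v p ->
  exists Fp, F p = Fp%:E /\
    forall u Fu, F u = Fu%:E -> Fp + lam^-1 * dotv (v - p) (u - p) <= Fu.
Proof.
move=> lam0 [[u0 Fu0] Fgt] Fcvx Fprox.
have [Fp eFp] : exists Fp, F p = Fp%:E.
  apply: EFin_of_finite => //; have := Fprox u0.
  by case: (F p) (Fgt p) => //; case: (F u0) Fu0.
exists Fp; split => // u Fu eFu.
pose c := (2 * lam)^-1; have c0 : 0 < c by rewrite invr_gt0 mulr_gt0.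
set d := dotv (v - p) (u - p); set N := dotv (u - p) (u - p).
suff : Fp - Fu + lam^-1 * d <= 0 by lra.
apply: (@le0_of_le_small_multiples _ (c * N)).
  exact: mulr_ge0 (ltW c0) (dotvv_ge0 _).
move=> t /andP[t0 t1]; pose ut := t *: u + (1 - t) *: p.
have Fut := Fcvx u p t; rewrite t0 t1 eFu eFp -!EFinM -EFinD in Fut.
have [Ft eFt] := EFin_of_finite (Fgt ut) (le_lt_trans (Fut isT) (ltry _)).
move: (Fut isT) (Fprox ut); rewrite -/ut eFt eFp -!EFinD !lee_fin => {}Fut.
have -> : ut - v = (p - v) + t *: (u - p) by apply/rowP => j; rewrite !mxE; ring.
rewrite !enorm_sqr /d /N -[v - p]opprB dotvNl; move: (p - v) (u - p) => a b.
rewrite dotvDl !dotvDr !dotvZl !dotvZr (dotvC b) -/c.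
have -> : lam^-1 = 2 * c by rewrite /c; field; exact: lt0r_neq0.
move=> Fprox_ut; rewrite -(ler_pM2l t0); nra.
Qed.

Lemma fconj_ge g w r y : g w = r%:E -> ((dotv w y - r)%:E <= fconj g y)%E.
Proof. by move=> gw; apply: ereal_sup_ubound; exists w => //; rewrite gw. Qed.

Lemma fconj_gtNy g y : proper_fun g -> (-oo < fconj g y)%E.
Proof.
move=> [[w gw] gt]; have [r er] := EFin_of_finite (gt w) gw.
exact: lt_le_trans (ltNyr _) (fconj_ge y er).
Qed.

Lemma fconj_le_subgradient g w r y : (forall u, -oo < g u)%E -> g w = r%:E ->
  (forall u gu, g u = gu%:E -> r + dotv y (u - w) <= gu) ->
  (fconj g y <= (dotv w y - r)%:E)%E.
Proof.
move=> gt gw sub; apply/ereal_supP => _ [u _ <-].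
case gu: (g u) (gt u) => [s| |] // _; last by rewrite addeC leNye.
by have := sub u s gu; rewrite dotvBr (dotvC y u) (dotvC y w) lee_fin; lra.
Qed.

Lemma convex_gradient_le (h : 'rV[R]_k -> R) gradh a b :
  convex_rfun h -> is_gradient h gradh -> h a + dotv (gradh a) (b - a) <= h b.
Proof.
move=> hcvx hgrad; set d := b - a.
suff : h a + dotv (gradh a) d - h b <= 0 by lra.
apply: (@le0_of_le_small_multiples _ (enorm d)); first exact: enorm_ge0.
move=> e /andP[e0 e1]; have [del del0 hdiff] := hgrad a e e0.
have d0 := enorm_ge0 d.
pose t := del / (del + enorm d + 1).
have t0 : 0 < t by rewrite divr_gt0 //; lra.
have t1 : t < 1 by rewrite ltr_pdivrMr ?mul1r; lra.
have td : t * enorm d < del by rewrite /t mulrAC ltr_pdivrMr; nra.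
have := hdiff (t *: d); rewrite enormZ gtr0_norm // dotvZr => /(_ td).
rewrite ler_norml => /andP[hd _].
have := hcvx b a t; rewrite (ltW t0) (ltW t1) => /(_ isT).
have -> : t *: b + (1 - t) *: a = a + t *: d by apply/rowP => j; rewrite !mxE; ring.
move=> hc; rewrite -(ler_pM2l t0); nra.
Qed.

Lemma lsc_le_of_approx F p (T : R) : lower_semicontinuous F ->
  (forall e, 0 < e -> exists q Fq, [/\ F q = Fq%:E, enorm (q - p) < e & Fq <= T + e]) ->
  (F p <= T%:E)%E.
Proof.
move=> Flsc approx; apply/lee_addgt0Pr => e e0; rewrite -EFinD leNgt.
apply/negP => /Flsc [V /nbhs_enormP [d d0 dV] FV].
pose e' := Num.min d (e / 2).
have e'0 : 0 < e' by rewrite lt_min d0 divr_gt0.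
have e'd : e' <= d by rewrite ge_min lexx.
have e'e : e' <= e / 2 by rewrite ge_min lexx orbT.
have [q [Fq [Fqe qp FqT]]] := approx _ e'0.
have := FV q (dV q (lt_le_trans qp e'd)); rewrite Fqe lte_fin; lra.
Qed.

Lemma fconj_le_of_approx g p (T : R) : (forall u, -oo < g u)%E ->
  (forall e, 0 < e -> exists q Gq,
     [/\ fconj g q = Gq%:E, enorm (q - p) < e & Gq <= T + e]) ->
  (fconj g p <= T%:E)%E.
Proof.
move=> gt approx; apply/ereal_supP => _ [w _ <-].
case gw: (g w) (gt w) => [r| |] // _; last by rewrite addeC leNye.
rewrite -EFinB lee_fin; apply/ler_addgt0Pr => e e0.
have w1 : 0 < enorm w + 1 by rewrite ltr_wpDl ?enorm_ge0.
pose e' := e / (enorm w + 1); have e'0 : 0 < e' by rewrite divr_gt0.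
have e'e : e' * (enorm w + 1) = e by rewrite mulfVK // lt0r_neq0.
have [q [Gq [Gqe qp GqT]]] := approx _ e'0.
have := fconj_ge q gw; rewrite Gqe lee_fin => wq.
have : dotv w (p - q) <= enorm w * e'.
  apply: le_trans (dotv_le_enorm _ _) _.
  by rewrite enorm_distC ler_wpM2l ?enorm_ge0 ?ltW.
rewrite dotvBr; nra.
Qed.

End ConvexAnalysis.

Section MinRatio.
Variable R : realType.
Implicit Types (t a b c e : R).

Lemma min_ratio_le t c e : min_ratio t c e <= t.
Proof. by rewrite /min_ratio; case: eqP => _ //; rewrite ge_min lexx. Qed.

Lemma min_ratio_mul_le t a b : 0 <= a -> 0 <= b -> min_ratio t a b * b <= a.
Proof.
move=> a0 b0; rewrite /min_ratio; case: eqP => [->|/eqP bn0]; first by rewrite mulr0.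
have bp : 0 < b by rewrite lt_def bn0 b0.
by rewrite -ler_pdivlMr // ge_min lexx orbT.
Qed.

Lemma min_ratio_ge t a b C : 0 <= b -> 0 < C -> b <= C * a ->
  Num.min t C^-1 <= min_ratio t a b.
Proof.
move=> b0 C0 bCa; rewrite /min_ratio; case: eqP => [_|/eqP bn0].
  by rewrite ge_min lexx.
have bp : 0 < b by rewrite lt_def bn0 b0.
have ap : 0 < a by rewrite -(pmulr_rgt0 _ C0); exact: lt_le_trans bp bCa.
rewrite le_min ge_min lexx /= ge_min; apply/orP; right.
by rewrite ler_pdivlMr // -(ler_pM2l C0) mulrA divff ?gt_eqF // mul1r.
Qed.

End MinRatio.

Section RealSequences.
Variable R : realType.
Implicit Types (u v : nat -> R) (a b c e : R).

Lemma ler1D_of_sqr_le a b : 0 <= a -> a ^+ 2 <= b -> a <= 1 + b.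
Proof. by move=> a0 ab; have := sqr_ge0 (a - 1); nra. Qed.

Lemma sqr_le_of_le1 a b : 0 <= a -> a <= b -> b <= 1 -> a ^+ 2 <= b.
Proof. by move=> a0 ab b1; nra. Qed.

Lemma noninc_from_le u n0 : (forall k, (n0 <= k)%N -> u k.+1 <= u k) ->
  forall N k, (n0 <= N)%N -> (N <= k)%N -> u k <= u N.
Proof.
move=> dec N k n0N; elim: k => [|k IH]; first by rewrite leqn0 => /eqP->.
rewrite leq_eqVlt => /orP[/eqP->//|Nk].
exact: le_trans (dec _ (leq_trans n0N Nk)) (IH Nk).
Qed.

Lemma noninc_lbounded_settles u n0 lb :
  (forall k, (n0 <= k)%N -> u k.+1 <= u k) -> (forall k, lb <= u k) ->
  forall e, 0 < e -> exists N, (n0 <= N)%N /\ forall k, (N <= k)%N -> u N - u k < e.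
Proof.
move=> dec lbu e e0; pose E := [set u (j + n0)%N | j in [set: nat]].
have lbE : has_lbound E by exists lb => _ [j _ <-].
have [_ [j _ <-] uj] := inf_adherent e0 (conj (ex_intro _ _ (imageT _ 0%N)) lbE).
exists (j + n0)%N; split => [|k jk]; first exact: leq_addl.
have : inf E <= u k.
  apply: (ge_inf lbE); exists (k - n0)%N => //.
  by rewrite subnK // (leq_trans (leq_addl _ _) jk).
lra.
Qed.

Lemma exists_small_scale e C : 0 < e -> 0 <= C ->
  exists2 d, 0 < d & [/\ d <= 1, d < e & d * C <= e].
Proof.
move=> e0 C0; have C2 : 0 < C + 2 by rewrite ltr_wpDl.
have eC : e / (C + 2) < e.
  by rewrite ltr_pdivrMr // ltr_pMr //; lra.
exists (Num.min 1 (e / (C + 2))); first by rewrite lt_min ltr01 divr_gt0.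
have de : Num.min 1 (e / (C + 2)) <= e / (C + 2) by rewrite ge_min lexx orbT.
split; [by rewrite ge_min lexx | exact: le_lt_trans de eC |].
apply: le_trans (ler_wpM2r C0 de) _.
by rewrite mulrAC ler_pdivrMr // ler_wpM2l ?(ltW e0) // lerDl.
Qed.

(* For nonnegative [u] this is convergence to [0]. *)
Definition vanishes u := forall e, 0 < e -> exists M, forall k, (M <= k)%N -> u k < e.

Lemma vanishes_le u v : (forall k, u k <= v k) -> vanishes v -> vanishes u.
Proof.
move=> uv vv e e0; have [M vM] := vv e e0.
by exists M => k Mk; exact: le_lt_trans (uv k) (vM k Mk).
Qed.

Lemma vanishesD u v : vanishes u -> vanishes v -> vanishes (fun k => u k + v k).
Proof.
move=> uv vv e e0; have e2 : 0 < e / 2 by rewrite divr_gt0.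
have [M1 uM] := uv _ e2; have [M2 vM] := vv _ e2.
exists (maxn M1 M2) => k; rewrite geq_max => /andP[M1k M2k].
by have := uM k M1k; have := vM k M2k; lra.
Qed.

Lemma vanishes_shift u : vanishes (fun k => u k.+1) -> vanishes u.
Proof.
move=> uv e e0; have [M uM] := uv e e0.
by exists M.+1 => -[|k] //= Mk; exact: uM.
Qed.

Lemma vanishes_sqr u : (forall k, 0 <= u k) -> vanishes (fun k => u k ^+ 2) -> vanishes u.
Proof.
move=> u0 uv e e0; have [M uM] := uv (e ^+ 2) (exprn_gt0 _ e0).
by exists M => k Mk; have := uM k Mk; rewrite ltr_sqr ?nnegrE // ltW.
Qed.

Lemma vanishes_le_scale u v c : 0 < c -> (forall k, u k <= c * v k) ->
  vanishes v -> vanishes u.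
Proof.
move=> c0 uv vv e e0; have [M vM] := vv (e / c) (divr_gt0 e0 c0).
exists M => k Mk; apply: le_lt_trans (uv k) _.
by rewrite mulrC -ltr_pdivlMr // vM.
Qed.

Lemma cvg_of_vanishes_enorm k (X : nat -> 'rV[R]_k) p :
  vanishes (fun j => enorm (X j - p)) -> X @ \oo --> p.
Proof.
move=> Xv; apply/cvgrPdist_lt => e e0; have [M XM] := Xv e e0.
exists M => // j /= Mj; rewrite distrC.
exact: le_lt_trans (mxnorm_le_enorm _) (XM j Mj).
Qed.

End RealSequences.

Section Extrapolation.
Variables (R : realType) (k : nat) (psi : R).
Implicit Types (a b c xh : 'rV[R]_k).

Lemma dotv_three_points a b c :
  2 * dotv (b - a) (c - b) = dotv (a - c) (a - c) - dotv (b - a) (b - a)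
    - dotv (b - c) (b - c).
Proof.
have -> : a - c = - ((b - a) + (c - b)) by apply/rowP => j; rewrite !mxE; ring.
rewrite -[b - c]opprB; move: (b - a) (c - b) => d d'.
by rewrite ?dotvNl ?dotvNr ?dotvDl ?dotvDr (dotvC d' d); ring.
Qed.

Hypothesis psi_neq0 : psi != 0.

Lemma extrapolation_step_identity (x1 x2 z1 z2 : 'rV[R]_k) :
  z2 = ((psi - 1) / psi) *: x1 + psi^-1 *: z1 ->
  2 * dotv (x1 - z1) (x2 - x1) =
    psi * (dotv (x2 - z2) (x2 - z2) - dotv (x1 - z2) (x1 - z2)
           - dotv (x2 - x1) (x2 - x1)).
Proof.
move=> ez.
have -> : x1 - z1 = psi *: (x1 - z2) by rewrite ez; apply/rowP => j; rewrite !mxE; field.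
have -> : x2 - z2 = (x1 - z2) + (x2 - x1) by apply/rowP => j; rewrite !mxE; ring.
move: (x1 - z2) (x2 - x1) => c d.
by rewrite ?dotvDl ?dotvDr ?dotvZl (dotvC d c); ring.
Qed.

Lemma extrapolation_dist_identity (x2 z2 z3 : 'rV[R]_k) xh : psi - 1 != 0 ->
  z3 = ((psi - 1) / psi) *: x2 + psi^-1 *: z2 ->
  2 * dotv (x2 - z2) (xh - x2) =
    psi / (psi - 1) * (dotv (z2 - xh) (z2 - xh) - dotv (z3 - xh) (z3 - xh))
    - (1 + psi^-1) * dotv (x2 - z2) (x2 - z2).
Proof.
move=> psi1 ez.
have -> : z3 - xh = ((psi - 1) / psi) *: (x2 - xh) + psi^-1 *: (z2 - xh).
  by rewrite ez; apply/rowP => j; rewrite !mxE; field.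
have -> : x2 - z2 = (x2 - xh) - (z2 - xh) by apply/rowP => j; rewrite !mxE; ring.
rewrite -[xh - x2]opprB; move: (x2 - xh) (z2 - xh) => c d.
rewrite ?dotvDl ?dotvDr ?dotvBl ?dotvBr ?dotvNl ?dotvNr ?dotvZl ?dotvZr (dotvC d c).
by field; rewrite psi_neq0 psi1.
Qed.

End Extrapolation.

Section Perturbation.
Variables (R : realType) (n m : nat) (K : 'M[R]_(n, m)).
Variables (G : 'rV[R]_n -> 'rV[R]_n) (L : R).
Hypotheses (L_ge0 : 0 <= L) (G_lipschitz : lipschitz_with L G).

Let mul_le_scale (a b e A B : R) : 0 <= a -> 0 <= b -> a <= e * A -> b <= B ->
  a * b <= e * (A * B).
Proof. by move=> a0 b0 aA bB; rewrite mulrA ler_pM. Qed.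

Lemma primal_error_le u xs ys (tmin : R) : 0 < tmin -> exists2 C, 0 <= C &
  forall e t x1 x2 z2 (y1 : 'rV[R]_m), 0 <= e <= 1 -> tmin <= t ->
    enorm (x1 - xs) <= e -> enorm (x2 - xs) <= e -> enorm (z2 - x2) <= e ->
    enorm (y1 - ys) <= e ->
    - (t^-1 * dotv (z2 - x2) (u - x2)) + dotv ((u - x2) *m K) y1 + dotv (G x1) (u - x2)
    <= dotv ((u - xs) *m K) ys + dotv (G xs) (u - xs) + e * C.
Proof.
move=> tmin0; have [cK cK0 Kb] := enorm_mulmx_bounded K.
have uxs0 := enorm_ge0 (u - xs); have ys0 := enorm_ge0 ys.
exists (tmin^-1 * (enorm (u - xs) + 1) + cK * (enorm ys + 1) + enorm (u - xs) * cK
        + L * (enorm (u - xs) + 1) + enorm (G xs)).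
  by rewrite !addr_ge0 ?mulr_ge0 ?invr_ge0 ?addr_ge0 ?enorm_ge0 ?(ltW tmin0) ?(ltW cK0).
move=> e t x1 x2 z2 y1 /andP[e0 e1] tmin_t x1e x2e z2e y1e.
have ux2 : enorm (u - x2) <= enorm (u - xs) + 1.
  apply: enorm_le_addr1 e1.
  have -> : u - x2 - (u - xs) = xs - x2 by apply/rowP => j; rewrite !mxE; ring.
  by rewrite enorm_distC.
have T1 := inv_scaled_dotv_le tmin0 tmin_t z2e ux2.
have T2 : dotv ((u - x2) *m K) y1 - dotv ((u - xs) *m K) ys
          <= e * (cK * (enorm ys + 1)) + e * (enorm (u - xs) * cK).
  apply: le_trans (dotvB_le _ _ _ _) _; rewrite -mulmxBl.
  have -> : u - x2 - (u - xs) = - (x2 - xs) by apply/rowP => j; rewrite !mxE; ring.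
  apply: lerD; last first.
    by rewrite mulrC ler_pM ?enorm_ge0 // mulrC Kb.
  apply: mul_le_scale; rewrite ?enorm_ge0 //; last exact: enorm_le_addr1 y1e e1.
  by apply: le_trans (Kb _) _; rewrite enormN mulrC ler_wpM2r ?(ltW cK0).
have T3 : dotv (G x1) (u - x2) - dotv (G xs) (u - xs)
          <= e * (L * (enorm (u - xs) + 1)) + e * enorm (G xs).
  apply: le_trans (dotvB_le _ _ _ _) _.
  have -> : u - x2 - (u - xs) = - (x2 - xs) by apply/rowP => j; rewrite !mxE; ring.
  apply: lerD; last by rewrite enormN mulrC ler_wpM2r ?enorm_ge0.
  apply: mul_le_scale; rewrite ?enorm_ge0 //.
  by apply: le_trans (G_lipschitz _ _) _; rewrite [e * L]mulrC ler_wpM2l.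
rewrite !mulrDr; lra.
Qed.

Lemma dual_error_le v (xs : 'rV[R]_n) ys (tmin : R) : 0 < tmin -> exists2 C, 0 <= C &
  forall e t x1 y0 y1, 0 <= e <= 1 -> tmin <= t ->
    enorm (x1 - xs) <= e -> enorm (y1 - ys) <= e -> enorm (y0 - y1) <= e ->
    - dotv (x1 *m K) (v - y1) - t^-1 * dotv (y0 - y1) (v - y1)
    <= - dotv (xs *m K) (v - ys) + e * C.
Proof.
move=> tmin0; have [cK cK0 Kb] := enorm_mulmx_bounded K.
have vys0 := enorm_ge0 (v - ys); have xs0 := enorm_ge0 xs.
exists (tmin^-1 * (enorm (v - ys) + 1) + cK * enorm (v - ys) + cK * (enorm xs + 1)).
  by rewrite !addr_ge0 ?mulr_ge0 ?invr_ge0 ?addr_ge0 ?enorm_ge0 ?(ltW tmin0) ?(ltW cK0).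
move=> e t x1 y0 y1 /andP[e0 e1] tmin_t x1e y1e y0e.
have vy1 : enorm (v - y1) <= enorm (v - ys) + 1.
  apply: enorm_le_addr1 e1.
  have -> : v - y1 - (v - ys) = - (y1 - ys) by apply/rowP => j; rewrite !mxE; ring.
  by rewrite enormN.
have T1 := inv_scaled_dotv_le tmin0 tmin_t y0e vy1.
have T2 : dotv (xs *m K) (v - ys) - dotv (x1 *m K) (v - y1)
          <= e * (cK * enorm (v - ys)) + e * (cK * (enorm xs + 1)).
  apply: le_trans (dotvB_le _ _ _ _) _; rewrite -mulmxBl.
  have -> : v - ys - (v - y1) = y1 - ys by apply/rowP => j; rewrite !mxE; ring.
  apply: lerD.
    apply: mul_le_scale; rewrite ?enorm_ge0 //.
    by apply: le_trans (Kb _) _; rewrite enorm_distC mulrC ler_wpM2r ?(ltW cK0).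
  rewrite [e * _]mulrC; apply: ler_pM; rewrite ?enorm_ge0 //.
  by apply: le_trans (Kb _) _; rewrite ler_wpM2l ?(ltW cK0) ?(enorm_le_addr1 x1e).
rewrite !mulrDr; lra.
Qed.

End Perturbation.

Section PGRPDA.
Variables (R : realType) (n m : nat).
Variables (f : 'rV[R]_n -> \bar R) (g : 'rV[R]_m -> \bar R) (K : 'M[R]_(n, m)).
Variables (h : 'rV[R]_n -> R) (gradh : 'rV[R]_n -> 'rV[R]_n) (Lbar : R).
Variables (beta psi mu mu' tau0 : R).
Variables (z x : nat -> 'rV[R]_n) (w y : nat -> 'rV[R]_m) (tau : nat -> R).
Hypotheses (f_proper : proper_fun f) (f_convex : convex_efun f)
  (f_lsc : lower_semicontinuous f) (g_proper : proper_fun g) (g_convex : convex_efun g).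
Hypotheses (h_convex : convex_rfun h) (h_grad : is_gradient h gradh)
  (Lbar_ge0 : 0 <= Lbar) (gradh_lipschitz : lipschitz_with Lbar gradh).
Hypotheses (beta_gt0 : 0 < beta) (psi_gt1 : 1 < psi) (psi_le_golden : psi <= golden)
  (two_mu'_gt0 : 0 < 2 * mu') (mu'_lt_mu : 2 * mu' < mu) (mu_lt_psi : mu < psi / 2)
  (tau0_gt0 : 0 < tau0) (tau_init : tau 0%N = tau0).
Hypothesis z_next : forall k, z k.+1 = ((psi - 1) / psi) *: x k + psi^-1 *: z k.
Hypothesis x_prox : forall k,
  is_prox (tau k) f (z k.+1 - tau k *: (y k *m K^T) - tau k *: gradh (x k)) (x k.+1).
Hypothesis tau_next : forall k, tau k.+1 =
  min_ratio
    (min_ratio (tau k) (mu * enorm (x k.+1 - x k))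
               (Num.sqrt beta * enorm (x k.+1 *m K - x k *m K)))
    (mu' * enorm (x k.+1 - x k))
    (enorm (gradh (x k.+1) - gradh (x k))).
Hypothesis w_prox : forall k,
  is_prox (beta * tau k.+1)^-1 g ((beta * tau k.+1)^-1 *: y k + x k.+1 *m K) (w k.+1).
Hypothesis y_next : forall k, y k.+1 = y k + (beta * tau k.+1) *: (x k.+1 *m K - w k.+1).

Lemma psi_sqr_le : psi ^+ 2 <= psi + 1.
Proof.
have : 2 * psi - 1 <= Num.sqrt 5.
  by move: psi_le_golden; rewrite /golden ler_pdivlMr //; lra.
have psi0 : 0 <= 2 * psi - 1 by move: psi_gt1; lra.
rewrite -(ler_sqr psi0) ?nnegrE ?sqrtr_ge0 // sqr_sqrtr //; nra.
Qed.

Lemma psi_lt2 : psi < 2.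
Proof. by move: psi_sqr_le psi_gt1; nra. Qed.

Lemma mu_gt0 : 0 < mu. Proof. by move: two_mu'_gt0 mu'_lt_mu; lra. Qed.
Lemma mu'_gt0 : 0 < mu'. Proof. by move: two_mu'_gt0; lra. Qed.
Lemma mu_lt1 : mu < 1. Proof. by move: psi_lt2 mu_lt_psi; lra. Qed.

Let s := Num.sqrt beta.
Let s_gt0 : 0 < s. Proof. by rewrite sqrtr_gt0. Qed.
Let s_sqr : s ^+ 2 = beta. Proof. by rewrite sqr_sqrtr // ltW. Qed.

Lemma tau_next_le k : tau k.+1 <= tau k.
Proof. by rewrite tau_next; apply: le_trans (min_ratio_le _ _ _) (min_ratio_le _ _ _). Qed.

Lemma tau_K_le k :
  tau k.+1 * (s * enorm ((x k.+1 - x k) *m K)) <= mu * enorm (x k.+1 - x k).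
Proof.
have sK0 : 0 <= s * enorm ((x k.+1 - x k) *m K) by rewrite mulr_ge0 ?enorm_ge0 ?ltW.
rewrite tau_next -mulmxBl; apply: le_trans (ler_wpM2r sK0 (min_ratio_le _ _ _)) _.
by rewrite min_ratio_mul_le // mulr_ge0 ?enorm_ge0 // (ltW mu_gt0).
Qed.

Lemma tau_grad_le k :
  tau k.+1 * enorm (gradh (x k.+1) - gradh (x k)) <= mu' * enorm (x k.+1 - x k).
Proof.
by rewrite tau_next min_ratio_mul_le ?enorm_ge0 // mulr_ge0 ?enorm_ge0 // (ltW mu'_gt0).
Qed.

Lemma tau_next_ge : exists2 c, 0 < c & forall k, Num.min (tau k) c <= tau k.+1.
Proof.
have [cK cK0 Kb] := enorm_mulmx_bounded K.
have mu0 := mu_gt0; have mu'0 := mu'_gt0.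
pose C1 := s * cK / mu; pose C2 := (Lbar + 1) / mu'.
have C1_gt0 : 0 < C1 by rewrite !divr_gt0 ?mulr_gt0.
have C2_gt0 : 0 < C2 by rewrite divr_gt0 // ltr_wpDl.
exists (Num.min C1^-1 C2^-1) => [|k]; first by rewrite lt_min !invr_gt0 C1_gt0.
rewrite tau_next -mulmxBl minA; set e := enorm (x k.+1 - x k).
apply: le_trans (min_ratio_ge _ (enorm_ge0 _) C2_gt0 _); last first.
  apply: le_trans (gradh_lipschitz _ _) _.
  by rewrite /C2 mulrA mulfVK ?gt_eqF // ler_wpM2r ?enorm_ge0 // lerDl.
apply: le_min2 => //; apply: min_ratio_ge => //; first by rewrite mulr_ge0 ?enorm_ge0 ?ltW.
by rewrite /C1 mulrA mulfVK ?gt_eqF // -mulrA ler_wpM2l ?(ltW s_gt0) ?Kb.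
Qed.

Lemma tau_lbounded : exists2 tmin, 0 < tmin & forall k, tmin <= tau k.
Proof.
have [c c0 tau_ge] := tau_next_ge.
exists (Num.min tau0 c) => [|k]; first by rewrite lt_min tau0_gt0.
elim: k => [|k IH]; first by rewrite tau_init ge_min lexx.
by apply: le_trans (tau_ge k); rewrite le_min IH ge_min lexx orbT.
Qed.

Lemma tau_gt0 k : 0 < tau k.
Proof. by have [tmin tmin0 tau_ge] := tau_lbounded; exact: lt_le_trans (tau_ge k). Qed.

Lemma x_step_ineq k : exists Fx, f (x k.+1) = Fx%:E /\
  forall u Fu, f u = Fu%:E ->
    Fx + (tau k)^-1 * dotv (z k.+1 - x k.+1) (u - x k.+1)
    - dotv ((u - x k.+1) *m K) (y k) - dotv (gradh (x k)) (u - x k.+1) <= Fu.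
Proof.
have t0 := tau_gt0 k.
have [Fx [eFx Fx_le]] := prox_variational_ineq t0 f_proper f_convex (x_prox k).
exists Fx; split => // u Fu eFu; apply: le_trans (Fx_le u Fu eFu).
have -> : z k.+1 - tau k *: (y k *m K^T) - tau k *: gradh (x k) - x k.+1
    = (z k.+1 - x k.+1) - tau k *: (y k *m K^T + gradh (x k)).
  by apply/rowP => j; rewrite !mxE; ring.
rewrite [dotv (_ *m K) _]dotv_mulmx_tr.
move: (z k.+1 - x k.+1) (u - x k.+1) => a b.
rewrite dotvBl dotvZl dotvDl mulrBr mulrA mulVf ?gt_eqF // !(dotvC b); lra.
Qed.

Lemma y_step_ineq k : exists Gy, fconj g (y k.+1) = Gy%:E /\
  forall v Gv, fconj g v = Gv%:E ->
    Gy + dotv (x k.+1 *m K) (v - y k.+1)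
    + (beta * tau k.+1)^-1 * dotv (y k - y k.+1) (v - y k.+1) <= Gv.
Proof.
have t1 := tau_gt0 k.+1; have bt : 0 < beta * tau k.+1 by rewrite mulr_gt0.
have bt' : 0 < (beta * tau k.+1)^-1 by rewrite invr_gt0.
have [Gw [eGw Gw_le]] := prox_variational_ineq bt' g_proper g_convex (w_prox k).
have w_y : w k.+1 = x k.+1 *m K + (beta * tau k.+1)^-1 *: (y k - y k.+1).
  by rewrite y_next; apply/rowP => j; rewrite !mxE; field; rewrite !gt_eqF.
(* [y_(k+1)] is a subgradient of [g] at [w_(k+1)], so [w_(k+1)] attains [g^*(y_(k+1))] *)
have sub u gu : g u = gu%:E -> Gw + dotv (y k.+1) (u - w k.+1) <= gu.
  move=> eu; have := Gw_le u gu eu; rewrite invrK -dotvZl.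
  suff -> : (beta * tau k.+1) *: ((beta * tau k.+1)^-1 *: y k + x k.+1 *m K - w k.+1)
    = y k.+1 by [].
  by rewrite [RHS]y_next; apply/rowP => j; rewrite !mxE; field; rewrite !gt_eqF.
have conj_le := fconj_le_subgradient g_proper.2 eGw sub.
have [Gy eGy] := EFin_of_finite (fconj_gtNy (y k.+1) g_proper) (le_lt_trans conj_le (ltry _)).
exists Gy; split => // v Gv eGv.
have := fconj_ge v eGw; rewrite eGv lee_fin.
move: conj_le; rewrite eGy lee_fin w_y; move: (y k - y k.+1) => d.
by rewrite !dotvDl !dotvZl !dotvBr; lra.
Qed.

Definition real_saddle xh yh Fh Gh := [/\ f xh = Fh%:E, fconj g yh = Gh%:E,
  forall u Fu, f u = Fu%:E -> Fh + h xh + dotv (xh *m K) yh <= Fu + h u + dotv (u *m K) yh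
  & forall v Gv, fconj g v = Gv%:E -> Gh - dotv (xh *m K) yh <= Gv - dotv (xh *m K) v].

Lemma saddle_pointP xh yh :
  saddle_point f h K g xh yh <-> exists Fh Gh, real_saddle xh yh Fh Gh.
Proof.
split=> [[f_fin [g_fin sad]]|[Fh [Gh [eF eG Sx Sy]]]].
  exists (fine (f xh)), (fine (fconj g yh)).
  split; rewrite ?fineK //.
  - move=> u Fu eu; have [_] := sad u yh.
    by rewrite /lagr eu -(fineK f_fin) -(fineK g_fin) -!EFinD lee_fin; lra.
  - move=> v Gv ev; have [+ _] := sad xh v.
    by rewrite /lagr ev -(fineK f_fin) -(fineK g_fin) -!EFinD lee_fin; lra.
split; first by rewrite eF.
split=> [|u v]; first by rewrite eG.
rewrite /lagr eF eG; split.
  case ev: (fconj g v) (fconj_gtNy v g_proper) => [Gv| |] // _; last by rewrite leNye.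
  by have := Sy v Gv ev; rewrite -!EFinD lee_fin; lra.
case eu: (f u) (f_proper.2 u) => [Fu| |] // _; last by rewrite leey.
by have := Sx u Fu eu; rewrite -!EFinD lee_fin; lra.
Qed.

Definition energy xh yh k :=
  psi / (psi - 1) / 2 * enorm (z k.+2 - xh) ^+ 2 + enorm (y k - yh) ^+ 2 / beta / 2
  + mu' / 2 * enorm (x k.+1 - x k) ^+ 2.

Definition residual k :=
  enorm (x k.+1 - z k.+2) ^+ 2 + enorm (x k.+2 - x k.+1) ^+ 2 + enorm (y k.+1 - y k) ^+ 2.

Lemma energy_core xh yh Fh Gh k : real_saddle xh yh Fh Gh ->
  dotv ((x k.+2 - x k.+1) *m K) (y k.+1 - y k)
  + dotv (gradh (x k.+1) - gradh (x k)) (x k.+2 - x k.+1)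
  <= dotv (x k.+2 - z k.+2) (xh - x k.+2) / tau k.+1
     + dotv (x k.+1 - z k.+1) (x k.+2 - x k.+1) / tau k
     + dotv (y k.+1 - y k) (yh - y k.+1) / (beta * tau k.+1).
Proof.
case=> eF eG Sx Sy.
have [F2 [eF2 x2_le]] := x_step_ineq k.+1.
have [F1 [eF1 x1_le]] := x_step_ineq k.
have [G1 [eG1 y1_le]] := y_step_ineq k.
have := x2_le xh Fh eF; have := x1_le (x k.+2) F2 eF2; have := y1_le yh Gh eG.
have := Sx (x k.+1) F1 eF1; have := Sy (y k.+1) G1 eG1.
have := convex_gradient_le (x k.+1) xh h_convex h_grad.
rewrite -[z k.+2 - x k.+2]opprB -[z k.+1 - x k.+1]opprB -[y k - y k.+1]opprB !dotvNl.
rewrite invfM ?mulmxBl ?dotvBl ?dotvBr; lra.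
Qed.

Lemma coupling_K_le k rho : tau k.+1 <= rho * tau k.+2 ->
  - (tau k.+1 * dotv ((x k.+2 - x k.+1) *m K) (y k.+1 - y k))
  <= rho * mu / 2 * (enorm (x k.+2 - x k.+1) ^+ 2 + enorm (y k.+1 - y k) ^+ 2 / beta).
Proof.
move=> t12; have t1 := tau_gt0 k.+1; have t2 := tau_gt0 k.+2.
have rho0 : 0 <= rho by rewrite -(pmulr_lge0 _ t2); exact: ltW (lt_le_trans t1 t12).
have := tau_K_le k.+1; have := normr_dotv_le ((x k.+2 - x k.+1) *m K) (y k.+1 - y k).
rewrite ler_norml -s_sqr; set d := dotv _ _.
set a := enorm (x k.+2 - x k.+1); set b := enorm (y k.+1 - y k).
set c := enorm ((x k.+2 - x k.+1) *m K) => /andP[dc _] tK.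
have a0 : 0 <= a := enorm_ge0 _; have b0 : 0 <= b := enorm_ge0 _.
have c0 : 0 <= c := enorm_ge0 _; have s0 := s_gt0.
have h1 : - (tau k.+1 * d) <= rho * tau k.+2 * (c * b).
  apply: le_trans (_ : tau k.+1 * (c * b) <= _); first by rewrite -mulrN ler_wpM2l; lra.
  by rewrite ler_wpM2r ?mulr_ge0.
have h2 : rho * tau k.+2 * (c * b) <= rho * mu * (a * (b / s)).
  have -> : rho * tau k.+2 * (c * b) = rho * (b / s) * (tau k.+2 * (s * c)).
    by field; rewrite gt_eqF.
  have -> : rho * mu * (a * (b / s)) = rho * (b / s) * (mu * a) by ring.
  by rewrite ler_wpM2l // mulr_ge0 // divr_ge0 // ltW.
have h3 : a * (b / s) <= (a ^+ 2 + b ^+ 2 / s ^+ 2) / 2.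
  by rewrite -expr_div_n; have := sqr_ge0 (a - b / s); nra.
apply: le_trans h1 (le_trans h2 _).
have -> : rho * mu / 2 * (a ^+ 2 + b ^+ 2 / s ^+ 2)
  = rho * mu * ((a ^+ 2 + b ^+ 2 / s ^+ 2) / 2) by ring.
by rewrite ler_wpM2l ?mulr_ge0 ?(ltW mu_gt0).
Qed.

Lemma coupling_grad_le k :
  - (tau k.+1 * dotv (gradh (x k.+1) - gradh (x k)) (x k.+2 - x k.+1))
  <= mu' / 2 * (enorm (x k.+1 - x k) ^+ 2 + enorm (x k.+2 - x k.+1) ^+ 2).
Proof.
have t1 := tau_gt0 k.+1; have := tau_grad_le k.
have := normr_dotv_le (gradh (x k.+1) - gradh (x k)) (x k.+2 - x k.+1).
rewrite ler_norml; set d := dotv _ _; set G := enorm (gradh _ - _).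
set a := enorm (x k.+1 - x k); set b := enorm (x k.+2 - x k.+1) => /andP[dG _] tG.
have b0 : 0 <= b := enorm_ge0 _; have G0 : 0 <= G := enorm_ge0 _.
have h1 : - (tau k.+1 * d) <= mu' * a * b.
  apply: le_trans (_ : tau k.+1 * G * b <= _); last by rewrite ler_wpM2r.
  by rewrite -mulrA -mulrN ler_wpM2l; lra.
have := sqr_ge0 (a - b); have := mu'_gt0; nra.
Qed.

Lemma energy_descent xh yh Fh Gh th rho k : real_saddle xh yh Fh Gh ->
  th * tau k <= tau k.+1 -> tau k.+1 <= rho * tau k.+2 ->
  energy xh yh k.+1 + th * psi / 2 * enorm (x k.+1 - z k.+2) ^+ 2
  + (th * psi - rho * mu - 2 * mu') / 2 * enorm (x k.+2 - x k.+1) ^+ 2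
  + (1 - rho * mu) / beta / 2 * enorm (y k.+1 - y k) ^+ 2 <= energy xh yh k.
Proof.
move=> S th_le le_rho; have t0 := tau_gt0 k; have t1 := tau_gt0 k.+1.
have psi0 : psi != 0 by rewrite gt_eqF // (lt_trans ltr01).
have psi1 : psi - 1 != 0 by rewrite subr_eq0 gt_eqF.
have := extrapolation_dist_identity psi0 xh psi1 (z_next k.+2).
have := extrapolation_step_identity psi0 (x k.+2) (z_next k.+1).
have := dotv_three_points (y k) (y k.+1) yh.
have := coupling_K_le le_rho; have := coupling_grad_le k.
set θ := tau k.+1 / tau k; have θ_le1 : θ <= 1 by rewrite ler_pdivrMr ?mul1r ?tau_next_le.
have th_le_θ : th <= θ by rewrite ler_pdivlMr.
have : tau k.+1 * (dotv ((x k.+2 - x k.+1) *m K) (y k.+1 - y k)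
                  + dotv (gradh (x k.+1) - gradh (x k)) (x k.+2 - x k.+1))
  <= dotv (x k.+2 - z k.+2) (xh - x k.+2) + θ * dotv (x k.+1 - z k.+1) (x k.+2 - x k.+1)
     + dotv (y k.+1 - y k) (yh - y k.+1) / beta.
  apply: le_trans (ler_wpM2l (ltW t1) (energy_core k S)) _.
  by rewrite le_eqVlt; apply/orP; left; apply/eqP; rewrite /θ; field; rewrite !gt_eqF.
rewrite /energy -!enorm_sqr mulrDr.
set A := dotv (x k.+2 - z k.+2) _; set B := dotv (x k.+1 - z k.+1) _.
set W := enorm (x k.+2 - z k.+2) ^+ 2; set V := enorm (x k.+1 - z k.+2) ^+ 2.
set D := enorm (x k.+2 - x k.+1) ^+ 2; set C := dotv (y k.+1 - y k) _.
move=> core hH hK eC eB eA.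
have eCb : C / beta = (2 * C) / beta / 2 by field; rewrite gt_eqF.
rewrite eC in eCb.
have W0 : 0 <= W := sqr_ge0 _; have V0 : 0 <= V := sqr_ge0 _; have D0 : 0 <= D := sqr_ge0 _.
have hB : θ * B <= psi / 2 * W - th * psi / 2 * (V + D).
  have psi2 : 0 <= psi / 2 by rewrite divr_ge0 // ltW // (lt_trans ltr01).
  have psiVD : 0 <= psi / 2 * (V + D) by rewrite mulr_ge0 ?addr_ge0.
  have : θ * (psi / 2 * W) <= psi / 2 * W.
    exact: ler_piMl (mulr_ge0 psi2 W0) θ_le1.
  have : th * (psi / 2 * (V + D)) <= θ * (psi / 2 * (V + D)) by rewrite ler_wpM2r.
  have -> : B = psi / 2 * W - psi / 2 * (V + D) by lra.
  lra.
have hW : psi * W <= (1 + psi^-1) * W.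
  rewrite ler_wpM2r // -(ler_pM2l (lt_trans ltr01 psi_gt1)) mulrDr mulfV // mulr1 -expr2.
  exact: psi_sqr_le.
lra.
Qed.

Lemma tau_ratio_eventually del : 0 < del ->
  exists N, forall j, (N <= j)%N -> tau j <= (1 + del) * tau j.+1.
Proof.
move=> del0; have [tmin tmin0 tau_ge] := tau_lbounded.
have tau_noninc k : (0 <= k)%N -> tau k.+1 <= tau k by move=> _; exact: tau_next_le.
have [N [_ settle]] := noninc_lbounded_settles tau_noninc tau_ge (mulr_gt0 del0 tmin0).
exists N => j Nj; have := settle j.+1 (leq_trans Nj (leqnSn _)).
have := noninc_from_le tau_noninc (leq0n N) Nj.
have := tau_ge j.+1; nra.
Qed.

Lemma energy_eventually_decreases : exists N c, 0 < c /\
  forall xh yh Fh Gh, real_saddle xh yh Fh Gh -> forall k, (N <= k)%N ->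
    energy xh yh k.+1 + c * residual k <= energy xh yh k.
Proof.
have mu0 := mu_gt0; have mu1 := mu_lt1; have mu'0 := mu'_gt0; have psi2 := psi_lt2.
have gap0 : 0 < psi - mu - 2 * mu' by move: mu'_lt_mu mu_lt_psi; lra.
pose del := Num.min (1 - mu) (psi - mu - 2 * mu') / 4.
have del_mu : del <= (1 - mu) / 4 by rewrite ler_pM2r // ge_min lexx.
have del_gap : del <= (psi - mu - 2 * mu') / 4 by rewrite ler_pM2r // ge_min lexx orbT.
have del0 : 0 < del by rewrite divr_gt0 // lt_min subr_gt0 mu1.
have [N tau_ratio] := tau_ratio_eventually del0.
pose cV := (1 - del) * psi / 2; pose cD := ((1 - del) * psi - (1 + del) * mu - 2 * mu') / 2.
pose cY := (1 - (1 + del) * mu) / beta / 2.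
have cV0 : 0 < cV by rewrite /cV divr_gt0 // mulr_gt0; move: psi_gt1; lra.
have cD0 : 0 < cD by rewrite /cD divr_gt0 //; move: psi_gt1; nra.
have cY0 : 0 < cY by rewrite /cY !divr_gt0 //; nra.
exists N, (Num.min cV (Num.min cD cY)); split; first by rewrite !lt_min cV0 cD0.
move=> xh yh Fh Gh S k Nk; have t0 := tau_gt0 k; have t1 := tau_gt0 k.+1.
have th_le : (1 - del) * tau k <= tau k.+1 by have := tau_ratio k Nk; nra.
have := energy_descent S th_le (tau_ratio k.+1 (leq_trans Nk (leqnSn _))).
rewrite -/cV -/cD -/cY /residual; set V := enorm _ ^+ 2; set D := enorm _ ^+ 2.
set Dy := enorm _ ^+ 2; set c := Num.min cV _.
have [V0 D0 Dy0] : [/\ 0 <= V, 0 <= D & 0 <= Dy] by rewrite !sqr_ge0.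
have : c * V <= cV * V by rewrite ler_wpM2r // ge_min lexx.
have : c * D <= cD * D by rewrite ler_wpM2r // !ge_min lexx orbT.
have : c * Dy <= cY * Dy by rewrite ler_wpM2r // !ge_min lexx !orbT.
lra.
Qed.

Lemma energy_ge0 xh yh k : 0 <= energy xh yh k.
Proof.
have psi1 : 0 < psi - 1 by rewrite subr_gt0.
have q0 : 0 <= psi / (psi - 1) / 2.
  by rewrite !divr_ge0 ?(ltW psi1) // (ltW (lt_trans ltr01 psi_gt1)).
have b0 := ltW beta_gt0; have mu'0 := ltW mu'_gt0.
rewrite /energy !addr_ge0 ?(mulr_ge0 q0) ?sqr_ge0 ?divr_ge0 ?sqr_ge0 //.
by rewrite mulr_ge0 ?divr_ge0 ?sqr_ge0.
Qed.

Lemma residual_ge0 k : 0 <= residual k.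
Proof. by rewrite /residual !addr_ge0 ?sqr_ge0. Qed.

Lemma energy_noninc xh yh N c : 0 < c ->
  (forall k, (N <= k)%N -> energy xh yh k.+1 + c * residual k <= energy xh yh k) ->
  forall j k, (N <= j)%N -> (j <= k)%N -> energy xh yh k <= energy xh yh j.
Proof.
move=> c0 decr; apply: noninc_from_le => k Nk; apply: le_trans (decr k Nk).
by rewrite lerDl mulr_ge0 ?(ltW c0) ?residual_ge0.
Qed.

Lemma residual_vanishes xh yh Fh Gh : real_saddle xh yh Fh Gh -> vanishes residual.
Proof.
move=> S; have [N [c [c0 decr]]] := energy_eventually_decreases.
have E_noninc := energy_noninc c0 (decr _ _ _ _ S).
move=> e e0; have [M [NM settle]] := noninc_lbounded_settles (n0 := N)
  (fun k Nk => E_noninc _ _ Nk (leqnSn k)) (energy_ge0 xh yh) (mulr_gt0 c0 e0).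
exists M => k Mk; have Nk := leq_trans NM Mk; rewrite -(ltr_pM2l c0).
have := decr _ _ _ _ S k Nk; have := settle k.+1 (leq_trans Mk (leqnSn _)).
have := E_noninc _ _ NM Mk; lra.
Qed.

Lemma iterates_bounded xh yh Fh Gh : real_saddle xh yh Fh Gh ->
  exists N B, forall k, (N <= k)%N -> enorm (x k.+1) <= B /\ enorm (y k.+1) <= B.
Proof.
move=> S; have [N [c [c0 decr]]] := energy_eventually_decreases.
pose EN := energy xh yh N; pose q := psi / (psi - 1) / 2.
have q0 : 0 < q by rewrite !divr_gt0 ?subr_gt0 // (lt_trans ltr01).
have E_le k : (N <= k)%N -> energy xh yh k <= EN := energy_noninc c0 (decr _ _ _ _ S) (leqnn N).
have E_parts j : [/\ 0 <= q * enorm (z j.+2 - xh) ^+ 2,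
    0 <= enorm (y j - yh) ^+ 2 / beta / 2 & 0 <= mu' / 2 * enorm (x j.+1 - x j) ^+ 2].
  split; first exact: mulr_ge0 (ltW q0) (sqr_ge0 _).
    by rewrite !divr_ge0 ?sqr_ge0 // ltW.
  by rewrite mulr_ge0 ?divr_ge0 ?sqr_ge0 // (ltW mu'_gt0).
have [xz zx yy] : [/\ forall k, (N <= k)%N -> enorm (x k.+1 - z k.+2) ^+ 2 <= EN / c,
    forall k, (N <= k)%N -> enorm (z k.+2 - xh) ^+ 2 <= EN / q
  & forall k, (N <= k)%N -> enorm (y k.+1 - yh) ^+ 2 <= 2 * beta * EN].
- split=> k Nk; have := E_le k Nk; have := E_le k.+1 (leq_trans Nk (leqnSn _)).
  + have := decr _ _ _ _ S k Nk; have := energy_ge0 xh yh k.+1.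
    rewrite ler_pdivlMr // /residual mulrC; have := sqr_ge0 (enorm (x k.+2 - x k.+1)).
    have := sqr_ge0 (enorm (y k.+1 - y k)); nra.
  + rewrite ler_pdivlMr // mulrC /energy -/q; have [_ ? ?] := E_parts k; lra.
  + rewrite /energy -/q; have [? _ ?] := E_parts k.+1.
    rewrite -ler_pdivrMl ?mulr_gt0 // invfM mulrC; lra.
exists N, (3 + EN / c + EN / q + 2 * beta * EN + enorm xh + enorm yh) => k Nk.
have E0 : 0 <= EN := energy_ge0 _ _ _.
have := ler1D_of_sqr_le (enorm_ge0 _) (xz k Nk); have := ler1D_of_sqr_le (enorm_ge0 _) (zx k Nk).
have := ler1D_of_sqr_le (enorm_ge0 _) (yy k Nk); have := enorm_ge0 xh; have := enorm_ge0 yh.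
have : 0 <= EN / c by rewrite divr_ge0 // ltW.
have : 0 <= EN / q by rewrite divr_ge0 // ltW.
have : 0 <= 2 * beta * EN by rewrite !mulr_ge0 // ltW.
have := ler_enormD (x k.+1 - z k.+2) (z k.+2 - xh); have := ler_enormD (y k.+1 - yh) yh.
have := ler_enormD (x k.+1 - z k.+2 + (z k.+2 - xh)) xh.
rewrite !addrA !subrK; lra.
Qed.

Lemma residual_parts_vanish : vanishes residual ->
  [/\ vanishes (fun k => enorm (x k.+1 - z k.+2)),
      vanishes (fun k => enorm (x k.+2 - x k.+1))
    & vanishes (fun k => enorm (y k.+1 - y k))].
Proof.
move=> res; split; apply: vanishes_sqr (fun k => enorm_ge0 _) (vanishes_le _ res) => k;
  rewrite /residual; have := sqr_ge0 (enorm (x k.+1 - z k.+2));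
  have := sqr_ge0 (enorm (x k.+2 - x k.+1)); have := sqr_ge0 (enorm (y k.+1 - y k)); lra.
Qed.

Section ClusterPoint.
Variables (xs : 'rV[R]_n) (ys : 'rV[R]_m).
Hypotheses (cl : joint_cluster (fun k => x k.+1) (fun k => y k.+1) xs ys)
  (res : vanishes residual).

Lemma cluster_close e : 0 < e -> exists k,
  [/\ enorm (x k.+1 - xs) <= e, enorm (x k.+2 - xs) <= e, enorm (z k.+2 - x k.+2) <= e,
      enorm (y k.+1 - ys) <= e & enorm (y k - y k.+1) <= e].
Proof.
move=> e0; have [vV vD vY] := residual_parts_vanish res; have e2 : 0 < e / 2 by rewrite divr_gt0.
have [M1 V_lt] := vV _ e2; have [M2 D_lt] := vD _ e2; have [M3 Y_lt] := vY _ e2.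
have [k [Mk x_lt y_lt]] := cl e2 (maxn M1 (maxn M2 M3)).
move: Mk; rewrite !geq_max => /and3P[M1k M2k M3k].
have := V_lt k M1k; have := D_lt k M2k; have := Y_lt k M3k => Yk Dk Vk.
exists k; split; try lra.
- have -> : x k.+2 - xs = (x k.+2 - x k.+1) + (x k.+1 - xs) by rewrite addrA subrK.
  by apply: le_trans (ler_enormD _ _) _; lra.
- have -> : z k.+2 - x k.+2 = - (x k.+1 - z k.+2) - (x k.+2 - x k.+1).
    by apply/rowP => j; rewrite !mxE; ring.
  by apply: le_trans (ler_enormD _ _) _; rewrite !enormN; lra.
- by rewrite enorm_distC; lra.
Qed.

Lemma cluster_primal_ineq u Fu : f u = Fu%:E ->
  (f xs <= (Fu + dotv ((u - xs) *m K) ys + dotv (gradh xs) (u - xs))%:E)%E.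
Proof.
move=> eFu; have [tmin tmin0 tau_ge] := tau_lbounded.
have [C C0 err] := primal_error_le K Lbar_ge0 gradh_lipschitz u xs ys tmin0.
apply: (lsc_le_of_approx (F := f) f_lsc) => e e0.
have [d d0 [d1 de dC]] := exists_small_scale e0 C0.
have [k [x1 x2 z2 y1 _]] := cluster_close d0.
have [F2 [eF2 F2_le]] := x_step_ineq k.+1.
exists (x k.+2), F2; split => //; first exact: le_lt_trans x2 de.
have := err d (tau k.+1) (x k.+1) (x k.+2) (z k.+2) (y k.+1).
rewrite (ltW d0) d1 tau_ge => /(_ isT isT x1 x2 z2 y1).
have := F2_le u Fu eFu; lra.
Qed.

Lemma cluster_dual_ineq v Gv : fconj g v = Gv%:E ->
  (fconj g ys <= (Gv - dotv (xs *m K) (v - ys))%:E)%E.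
Proof.
move=> eGv; have [tmin tmin0 tau_ge] := tau_lbounded.
have btmin : 0 < beta * tmin by rewrite mulr_gt0.
have [C C0 err] := dual_error_le K v xs ys btmin.
apply: (fconj_le_of_approx (g := g) g_proper.2) => e e0.
have [d d0 [d1 de dC]] := exists_small_scale e0 C0.
have [k [x1 _ _ y1 y0]] := cluster_close d0.
have [G1 [eG1 G1_le]] := y_step_ineq k.
exists (y k.+1), G1; split => //; first exact: le_lt_trans y1 de.
have bt : beta * tmin <= beta * tau k.+1 by rewrite ler_wpM2l ?tau_ge // ltW.
have := err d (beta * tau k.+1) (x k.+1) (y k) (y k.+1).
rewrite (ltW d0) d1 => /(_ isT bt x1 y1 y0).
have := G1_le v Gv eGv; lra.
Qed.

Lemma cluster_saddle : saddle_point f h K g xs ys.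
Proof.
have [[u0 fu0] _] := f_proper; have [Fu0 eFu0] := EFin_of_finite (f_proper.2 u0) fu0.
have [Fs eFs] := EFin_of_finite (f_proper.2 xs)
  (le_lt_trans (cluster_primal_ineq eFu0) (ltry _)).
have [G1 [eG1 _]] := y_step_ineq 0.
have [Gs eGs] := EFin_of_finite (fconj_gtNy ys g_proper)
  (le_lt_trans (cluster_dual_ineq eG1) (ltry _)).
apply/saddle_pointP; exists Fs, Gs; split=> // [u Fu eFu|v Gv eGv].
  have := cluster_primal_ineq eFu; rewrite eFs lee_fin mulmxBl dotvBl.
  have := convex_gradient_le xs u h_convex h_grad; lra.
by have := cluster_dual_ineq eGv; rewrite eGs lee_fin dotvBr; lra.
Qed.

Lemma energy_vanishes_at_cluster : vanishes (energy xs ys).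
Proof.
have [Fs [Gs S]] := (saddle_pointP xs ys).1 cluster_saddle.
have [N [c [c0 decr]]] := energy_eventually_decreases.
have E_noninc := energy_noninc c0 (decr _ _ _ _ S); have [vV vD _] := residual_parts_vanish res.
pose q := psi / (psi - 1) / 2; pose Cq := q + beta^-1 / 2 + mu' / 2.
have q0 : 0 < q by rewrite !divr_gt0 ?subr_gt0 // (lt_trans ltr01).
have Cq0 : 0 <= Cq.
  have : 0 <= beta^-1 / 2 by rewrite divr_ge0 // invr_ge0 ltW.
  have : 0 <= mu' / 2 by rewrite divr_ge0 // (ltW mu'_gt0).
  by move: q0; rewrite /Cq; lra.
move=> e e0; have e2 : 0 < e / 2 by rewrite divr_gt0.
have [d d0 [d1 _ dCq]] := exists_small_scale e2 Cq0; have d3 : 0 < d / 3 by rewrite divr_gt0.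
have [M1 V_lt] := vV _ d3; have [M2 D_lt] := vD _ d3.
have [k [Mk x_lt y_lt]] := cl d3 (maxn N (maxn M1 M2)).
move: Mk; rewrite !geq_max => /and3P[Nk M1k M2k].
have := V_lt k.+1 (leq_trans M1k (leqnSn _)); have := D_lt k M2k => Dk Vk.
have z3 : enorm (z k.+3 - xs) <= d.
  have -> : z k.+3 - xs = - (x k.+2 - z k.+3) + ((x k.+2 - x k.+1) + (x k.+1 - xs)).
    by apply/rowP => j; rewrite !mxE; ring.
  apply: le_trans (ler_enormD _ _) _; rewrite enormN.
  apply: le_trans (lerD (lexx _) (ler_enormD _ _)) _; lra.
have E_le : energy xs ys k.+1 <= d * Cq.
  rewrite /energy -/q /Cq !mulrDr; apply: lerD; first apply: lerD.
  - by rewrite mulrC ler_wpM2r ?(ltW q0) // sqr_le_of_le1 ?enorm_ge0.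
  - rewrite -mulrA ler_wpM2r ?divr_ge0 ?invr_ge0 ?(ltW beta_gt0) //.
    by rewrite sqr_le_of_le1 ?enorm_ge0 //; lra.
  - rewrite mulrC ler_wpM2r ?divr_ge0 ?(ltW mu'_gt0) //.
    by rewrite sqr_le_of_le1 ?enorm_ge0 //; lra.
exists k.+1 => j kj; apply: le_lt_trans (E_noninc _ _ (leq_trans Nk (leqnSn _)) kj) _.
lra.
Qed.

Lemma iterates_cvg : x @ \oo --> xs /\ y @ \oo --> ys.
Proof.
have Ev := energy_vanishes_at_cluster; have [vV _ _] := residual_parts_vanish res.
pose q := psi / (psi - 1) / 2.
have q0 : 0 < q by rewrite !divr_gt0 ?subr_gt0 // (lt_trans ltr01).
have Ey k : 0 <= enorm (y k - ys) ^+ 2 / beta / 2.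
  by rewrite !divr_ge0 ?sqr_ge0 // ltW.
have Ex k : 0 <= mu' / 2 * enorm (x k.+1 - x k) ^+ 2.
  by rewrite mulr_ge0 ?divr_ge0 ?sqr_ge0 // (ltW mu'_gt0).
have Ez k : 0 <= q * enorm (z k.+2 - xs) ^+ 2 := mulr_ge0 (ltW q0) (sqr_ge0 _).
have vZ : vanishes (fun k => enorm (z k.+2 - xs)).
  have qi : 0 < q^-1 by rewrite invr_gt0.
  apply: vanishes_sqr (fun k => enorm_ge0 _) (vanishes_le_scale qi _ Ev) => k.
  by rewrite ler_pdivlMl // /energy -/q; have := Ex k; have := Ey k; lra.
split; apply: cvg_of_vanishes_enorm.
  apply: vanishes_shift; apply: vanishes_le (vanishesD vV vZ) => k /=.
  have -> : x k.+1 - xs = (x k.+1 - z k.+2) + (z k.+2 - xs) by rewrite addrA subrK.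
  exact: ler_enormD.
apply: vanishes_sqr (fun k => enorm_ge0 _) (vanishes_le_scale (c := 2 * beta) _ _ Ev).
  by rewrite mulr_gt0.
move=> k; rewrite /energy -/q -ler_pdivrMl ?mulr_gt0 // invfM.
by have := Ex k; have := Ez k; lra.
Qed.

End ClusterPoint.

Lemma pgrpda_converges : (exists xh yh, saddle_point f h K g xh yh) ->
  exists xh yh, saddle_point f h K g xh yh /\ x @ \oo --> xh /\ y @ \oo --> yh.
Proof.
move=> [xh [yh /saddle_pointP [Fh [Gh S]]]].
have [N [B xyB]] := iterates_bounded S.
have [xs [ys cl]] := bounded_joint_cluster xyB.
have res := residual_vanishes S.
by exists xs, ys; split; [exact: cluster_saddle cl res | exact: iterates_cvg cl res].
Qed.

End PGRPDA.

Theorem theorem3p1 (R : realType) (n m : nat)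
  (f : 'rV[R]_n -> \bar R) (g : 'rV[R]_m -> \bar R)
  (K : 'M[R]_(n, m)) (h : 'rV[R]_n -> R) (gradh : 'rV[R]_n -> 'rV[R]_n)
  (Lbar : R)
  (beta psi mu mu' tau0 : R)
  (z x : nat -> 'rV[R]_n) (w y : nat -> 'rV[R]_m) (tau : nat -> R) :
  (* f, g proper convex lsc *)
  proper_fun f -> convex_efun f -> lower_semicontinuous f ->
  proper_fun g -> convex_efun g -> lower_semicontinuous g ->
  (* h convex, differentiable with Lbar-Lipschitz gradient *)
  convex_rfun h -> is_gradient h gradh -> 0 <= Lbar -> lipschitz_with Lbar gradh ->
  (* (A1) *)
  (exists xs ys, saddle_point f h K g xs ys) ->
  rel_interior (Kdomf_minus_domg f K g) 0 ->
  (* parameters *)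
  0 < beta -> 1 < psi -> psi <= golden -> 0 < 2 * mu' -> 2 * mu' < mu -> mu < psi / 2 ->
  0 < tau0 ->
  (* P-GRPDA iterations *)
  z 0%N = x 0%N -> tau 0%N = tau0 ->
  (forall k : nat,
     z k.+1 = ((psi - 1) / psi) *: x k + psi^-1 *: z k) ->
  (forall k : nat,
     is_prox (tau k) f
       (z k.+1 - tau k *: (y k *m K^T) - tau k *: gradh (x k)) (x k.+1)) ->
  (forall k : nat,
     tau k.+1 =
       min_ratio
         (min_ratio (tau k) (mu * enorm (x k.+1 - x k))
                    (Num.sqrt beta * enorm (x k.+1 *m K - x k *m K)))
         (mu' * enorm (x k.+1 - x k))
         (enorm (gradh (x k.+1) - gradh (x k)))) ->
  (forall k : nat,
     is_prox (beta * tau k.+1)^-1 g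
       ((beta * tau k.+1)^-1 *: y k + x k.+1 *m K) (w k.+1)) ->
  (forall k : nat,
     y k.+1 = y k + (beta * tau k.+1) *: (x k.+1 *m K - w k.+1)) ->
  exists (xh : 'rV[R]_n) (yh : 'rV[R]_m),
    saddle_point f h K g xh yh /\ x @ \oo --> xh /\ y @ \oo --> yh.
Proof.
move=> f_proper f_convex f_lsc g_proper g_convex _ h_convex h_grad Lbar_ge0 gradh_lip
  saddle_exists _ beta_gt0 psi_gt1 psi_le_golden two_mu'_gt0 mu'_lt_mu mu_lt_psi
  tau0_gt0 _ tau_init z_next x_prox tau_next w_prox y_next.
exact: (pgrpda_converges f_proper f_convex f_lsc g_proper g_convex h_convex h_grad
  Lbar_ge0 gradh_lip beta_gt0 psi_gt1 psi_le_golden two_mu'_gt0 mu'_lt_mu mu_lt_psi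
  tau0_gt0 tau_init z_next x_prox tau_next w_prox y_next saddle_exists).
Qed.
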